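(* Let $(X,\le)$ be a partially ordered set, and for $x\in X$ let $K_x=\{y\in X: y\le x\}$. Let $\tau_\le$ be the topology on $X$ generated by the sets $K_x$ and $X\setminus K_x$, $x\in X$. The following are equivalent: (i) $(X,\tau_\le)$ is compact; (ii) $(X,\le)$ satisfies the descending chain condition (every decreasing sequence $x_1\ge x_2\ge\dots$ is eventually constant), there is a finite $F\subset X$ with $X=\bigcup_{x\in F}K_x$, and for any $x,y\in X$ there is a finite $F(x,y)\subset X$ with $K_x\cap K_y=\bigcup_{z\in F(x,y)}K_z$. *)

From HB Require Import structures.
From mathcomp Require Import all_boot all_order.
From mathcomp Require Import all_classical all_reals all_analysis.
Unset Printing Implicit Defensive.
Import Order.TTheory.
Local Open Scope classical_set_scope.
Local Open Scope order_scope.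

Definition Kdown {d : Order.disp_t} {X : porderType d} (x : X) : set X :=
  [set y | y <= x].

Definition le_subbase {d : Order.disp_t} (X : porderType d) : set (set X) :=
  [set A | exists x : X, A = Kdown x \/ A = ~` Kdown x].

(* X equipped with the topology tau_<= generated by the subbase above *)
Definition le_topology {d : Order.disp_t} (X : porderType d) : Type := X.

Section LeTopology.
Context {d : Order.disp_t} (X : porderType d).
HB.instance Definition _ := Choice.on (le_topology X).
HB.instance Definition _ :=
  @isSubBaseTopological.Build (le_topology X) (set X) (le_subbase X) idfun.
End LeTopology.

From HB Require Import structures.
From mathcomp Require Import all_boot all_order.
From mathcomp Require Import all_classical all_reals all_analysis.
From mathcomp Require Import finmap.
Import Order.TTheory.
Local Open Scope order_scope.
Local Open Scope classical_set_scope.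

(* The sets K_x are clopen for tau_<=.  If X is compact, every closed
   down-closed set (X itself, K_x `&` K_y) is covered by finitely many of the
   open sets K_z; and a cluster point p of a decreasing sequence u forces it
   to stabilise: either p lies below every term, and its neighbourhood K_p
   catches some term, or p avoids some K_(u m), a neighbourhood missing the
   whole tail after m.  Conversely, an ultrafilter F contains some K_x (by the
   finite cover), hence, by the DCC, some K_p with p minimal.  Then F
   converges to p: were K_x in F with p not below x, so would be
   K_x `&` K_p, hence one of the finitely many K_z composing it, with z < p. *)

Definition dcc {d : Order.disp_t} (X : porderType d) : Prop :=
  forall u : nat -> X, (forall n, u n.+1 <= u n) ->
    exists N, forall n, (N <= n)%N -> u n = u N.

Definition finitely_generated_downset {d : Order.disp_t} {X : porderType d}
    (A : set X) : Prop :=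
  exists s : seq X, A = \bigcup_(z in [set` s]) Kdown z.

Lemma ultra_bigcup_seq (T : Type) (I : eqType) (F : set_system T)
    (A : I -> set T) (s : seq I) :
  UltraFilter F -> F (\bigcup_(i in [set` s]) A i) ->
  exists2 i, i \in s & F (A i).
Proof.
move=> UF; elim: s => [|a s IHs].
  by rewrite set_nil bigcup_set0 => /(filter_not_empty F).
have -> : [set` a :: s] = a |` [set` s].
  by apply/seteqP; split=> i /=; rewrite in_cons => /predU1P.
rewrite bigcup_setU1 => FAas.
have [FAa|FnAa] := in_ultra_setVsetC (A a) UF.
  by exists a; rewrite ?mem_head.
have [|i si FAi] := IHs.
  by apply: filterS (filterI FnAa FAas) => t [nAat [|]].
by exists i; rewrite // in_cons si orbT.
Qed.

Lemma dcc_minimal {d : Order.disp_t} {X : porderType d} (S : set X) :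
  dcc X -> S !=set0 -> exists2 p, S p & forall z, S z -> z <= p -> z = p.
Proof.
move=> dccX [x0 Sx0]; apply: contrapT => nomin.
have below x : exists z, S x -> S z /\ z < x.
  have [Sx|] := pselect (S x); last by exists x.
  apply: contrapT => /forallNP nobelow; apply: nomin; exists x => // z Sz zx.
  apply: contrapT => /eqP zNx; apply: (nobelow z) => _.
  by rewrite lt_neqAle zNx zx.
have [next nextP] := choice below.
pose u n := iter n next x0.
have Su n : S (u n) by elim: n => //= n /nextP[].
have [N uN] := dccX u (fun n => ltW (nextP _ (Su n)).2).
have := (nextP _ (Su N)).2.
by rewrite -[next (u N)]/(u N.+1) uN ?ltxx.
Qed.

Section LeTopology.
Context {d : Order.disp_t} {X : porderType d}.
Local Notation T := (le_topology X).

Lemma le_subbase_open (A : set X) : le_subbase X A -> @open T A.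
Proof.
move=> sA; exists [set A]; last first.
  by rewrite predeqE => ?; split=> [[_ ->]|] //; exists A.
move=> _ ->; exists [fset A]%fset.
  by move=> ?; rewrite inE => /eqP->; apply/mem_set.
rewrite predeqE=> x; split=> [|Ax i]; first by apply; rewrite /= inE.
by rewrite /= inE => /eqP ->.
Qed.

Lemma Kdown_open (x : X) : @open T (Kdown x).
Proof. by apply: le_subbase_open; exists x; left. Qed.

Lemma Kdown_closed (x : X) : @closed T (Kdown x).
Proof.
rewrite -[Kdown x]setCK; apply: open_closedC; apply: le_subbase_open.
by exists x; right.
Qed.

Lemma nbhs_Kdown (x : T) : nbhs x (Kdown x).
Proof. by apply: open_nbhs_nbhs; split; [exact: Kdown_open|exact: lexx]. Qed.

Lemma nbhs_setC_Kdown (p x : T) : ~ p <= x -> nbhs p (~` Kdown x).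
Proof.
move=> pNx; apply: open_nbhs_nbhs; split=> //.
exact/closed_openC/Kdown_closed.
Qed.

Lemma le_topology_cvg (F : set_system T) (p : T) : Filter F ->
  (forall A : set X, le_subbase X A -> A p -> F A) -> F --> p.
Proof.
move=> FF Fsub A /=; rewrite (@nbhsE T) => -[_ [[B Bsub <-] [C BC Cp] BA]].
rewrite nbhs_filterE; apply: filterS BA _; apply: (@filterS _ _ _ C).
  by move=> ? ?; exists C.
have [D Dsub DC] := Bsub _ BC; rewrite -DC; apply: filter_bigI => E DE.
apply: Fsub; first exact/set_mem/Dsub.
by move: Cp; rewrite -DC => /(_ _ DE).
Qed.

(* [compact_cover] is stated for pointed spaces; a nonempty set supplies a point. *)
Definition pointed_le_topology (x0 : X) : Type := T.
HB.instance Definition _ x0 := Topological.on (pointed_le_topology x0).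
HB.instance Definition _ x0 := isPointed.Build (pointed_le_topology x0) x0.

Lemma compact_downset (C : set T) : compact C ->
  (forall z w : X, C z -> w <= z -> C w) -> finitely_generated_downset C.
Proof.
move=> cptC Cdown; have [[x0 Cx0]|C0] := pselect (C !=set0); last first.
  exists [::]; rewrite set_nil bigcup_set0; apply/seteqP; split=> // y Cy.
  by apply: C0; exists y.
have [s sC Cs] : finite_subset_cover C Kdown C.
  have : @cover_compact (pointed_le_topology x0) C by rewrite -compact_cover.
  apply; first by move=> z _; exact: Kdown_open.
  by move=> z Cz; exists z => //; exact: lexx.
exists s; rewrite eqEsubset; split; first by move=> y /Cs [z sz yz]; exists z.
by move=> y [z /sC/set_mem Cz yz]; exact: Cdown Cz yz.
Qed.

Lemma compact_dcc : compact [set: T] -> dcc X.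
Proof.
move=> cptX u u_noninc.
have u_antihomo : {homo u : m n / (m <= n)%N >-> n <= m}.
  by apply: homo_leq => // y x z xy yz; exact: le_trans yz xy.
have [p [_ p_cluster]] := cptX ((u : nat -> T) @ \oo) _ filterT.
have tail_meets m (B : set T) : nbhs p B -> exists2 k, (m <= k)%N & B (u k).
  move=> pB; have tail : ((u : nat -> T) @ \oo) (u @` [set k | (m <= k)%N]).
    by exists m => // k mk; exists k.
  by have [_ [[k mk <-] Buk]] := p_cluster _ _ tail pB; exists k.
have [p_low|/existsNP[m pNum]] := pselect (forall n, p <= u n).
  have [k _ ukp] := tail_meets 0%N _ (nbhs_Kdown p).
  exists k => n kn; apply/eqP; rewrite eq_le u_antihomo //=.
  exact: le_trans ukp (p_low n).
have [k mk] := tail_meets m _ (nbhs_setC_Kdown _ _ pNum).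
by case/(_ (u_antihomo _ _ mk)).
Qed.

Lemma ultra_cvg_minimal (F : set_system T) (p : X) : UltraFilter F ->
  (forall x y : X, finitely_generated_downset (Kdown x `&` Kdown y)) ->
  F (Kdown p) -> (forall z, F (Kdown z) -> z <= p -> z = p) -> F --> (p : T).
Proof.
move=> UF meet_fg Fp p_min; apply: le_topology_cvg => _ [x [->|->]] px.
  by apply: filterS Fp => y yp; exact: le_trans yp px.
have [Fx|//] := in_ultra_setVsetC (Kdown x) UF.
have [s xps] := meet_fg x p.
have [z zs Fz] : exists2 z, z \in s & F (Kdown z).
  by apply: ultra_bigcup_seq; rewrite -xps; exact: filterI.
have [zx zp] : (Kdown x `&` Kdown p) z.
  by rewrite xps; exists z => //; exact: lexx.
by move: zx; rewrite (p_min z Fz zp).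
Qed.

Lemma dcc_compact : dcc X -> finitely_generated_downset [set: X] ->
  (forall x y : X, finitely_generated_downset (Kdown x `&` Kdown y)) ->
  compact [set: T].
Proof.
move=> dccX [s Xs] meet_fg; rewrite compact_ultra => F UF _.
have [x0 _ Fx0] : exists2 x0, x0 \in s & F (Kdown x0).
  by apply: ultra_bigcup_seq; rewrite -Xs; exact: filterT.
have [p Fp p_min] := @dcc_minimal _ _ [set x | F (Kdown x)] dccX
  (ex_intro _ x0 Fx0).
by exists p; split=> //; exact: ultra_cvg_minimal.
Qed.

End LeTopology.

Theorem proposition3p12 (d : Order.disp_t) (X : porderType d) :
  compact [set: le_topology X] <->
  [/\ (forall u : nat -> X, (forall n, u n.+1 <= u n) ->
         exists N, forall n, (N <= n)%N -> u n = u N),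
      (exists F : seq X, [set: X] = \bigcup_(x in [set` F]) Kdown x) &
      (forall x y : X, exists F : seq X,
         setI (Kdown x) (Kdown y) = \bigcup_(z in [set` F]) Kdown z)].
Proof.
split=> [cptX|[]]; last exact: dcc_compact.
split; first exact: compact_dcc.
  exact: compact_downset.
move=> x y; apply: compact_downset.
  apply: (subclosed_compact _ cptX) => //.
  exact: closedI (Kdown_closed x) (Kdown_closed y).
by move=> z w [zx zy] wz; split; exact: le_trans wz _.
Qed.
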